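(* Let $p$ be a prime, $n\ge1$, $\zeta=\zeta_{p^n}$ a primitive $p^n$th root of unity, $T=\mathbb{Z}_{(p)}[\zeta]$, $t=1-\zeta$ with valuation $v_t$. Then the tuple $\tau=(1-\zeta^j)_{j\in[0,p^n-1]}$ is minimally ordered.
   Context: A tuple $(\xi_0,\dots,\xi_{r-1})$ of pairwise distinct elements of $T$ is minimally ordered if $\sum_{i\in[0,j-1]}v_t(\xi_j-\xi_i)\le\sum_{i\in[0,j-1]}v_t(\xi_k-\xi_i)$ for all $j\in[0,r-1]$ and $k\in[j+1,r-1]$. *)

From HB Require Import structures.
From mathcomp Require Import all_boot all_order all_algebra all_field.
From Stdlib Require Import ClassicalEpsilon.
Set Implicit Arguments. Unset Strict Implicit. Unset Printing Implicit Defensive.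
Import Order.TTheory GRing.Theory Num.Theory.
Local Open Scope ring_scope.

Definition in_Zp (p : nat) (q : rat) : bool := ~~ (p %| `|denq q|)%N.

Definition inT (p : nat) (zeta : algC) (x : algC) : Prop :=
  exists2 f : {poly rat}, (forall i : nat, in_Zp p f`_i)
                        & x = (map_poly ratr f).[zeta].

Definition tt (zeta : algC) : algC := 1 - zeta.

Definition tdvd (p : nat) (zeta : algC) (k : nat) (x : algC) : Prop :=
  exists2 y, inT p zeta y & x = tt zeta ^+ k * y.

(* v_t(x): the exponent k with t^k | x and t^(k+1) not dividing x in T
   (well defined for nonzero x in the DVR T; arbitrary for x = 0). *)
Definition vt (p : nat) (zeta : algC) (x : algC) : nat :=
  epsilon (inhabits 0%N)
    (fun k => tdvd p zeta k x /\ ~ tdvd p zeta k.+1 x).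

Definition minimally_ordered (p : nat) (zeta : algC) (r : nat)
  (xi : nat -> algC) : Prop :=
  [/\ (forall j, (j < r)%N -> inT p zeta (xi j)),
      (forall i j, (i < r)%N -> (j < r)%N -> i <> j -> xi i <> xi j)
    & (forall j k, (j < k)%N -> (k < r)%N ->
        (\sum_(i < j) vt p zeta (xi j - xi i)%R <=
         \sum_(i < j) vt p zeta (xi k - xi i)%R)%N)].

From mathcomp Require Import all_boot all_algebra all_field.
From mathcomp Require Import zify ring.
From mathcomp Require Import boolp.
From Stdlib Require Import ClassicalEpsilon.
Import GRing.Theory Num.Theory.
Set Implicit Arguments. Unset Strict Implicit. Unset Printing Implicit Defensive.

(* Write xi_j = 1 - zeta^j.  As xi_k - xi_i = zeta^i (1 - zeta^(k-i)) and zeta is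
   a unit of T, v_t(xi_k - xi_i) only depends on k - i, and v_t(1 - zeta^m) is the
   number of layers l such that t^(l+1) divides 1 - zeta^m.  For each layer, these
   exponents m contain 0 and are closed under addition, because
   1 - zeta^(x+y) = (1 - zeta^x) + zeta^x (1 - zeta^y).  For such a set S of
   naturals, sliding the window [1, j] to [a + 1, a + j] cannot decrease the
   number of elements of S it contains: if c is the largest element of S below a,
   then d |-> c + d maps S /\ [1, j] injectively into S /\ [a + 1, a + j].
   Summing over the layers gives minimality.
   The layer description needs v_t(1 - zeta^m) < 2 p^n for 0 < m < p^n.  This
   holds because t^(p^n) lies in pT and 1 - zeta^m divides p: were t^(2 p^n) to
   divide 1 - zeta^m, then 1/p would lie in T, whereas T /\ Q = Z_(p). *)

Lemma leq_sum_shift_addn_closed (s : pred nat) a j :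
  s 0 -> (forall x y, s x -> s y -> s (x + y)) ->
  \sum_(i < j) s (j - i) <= \sum_(i < j) s (a + (j - i)).
Proof.
move=> s0 sD.
have ex_c : exists c, s c && (c <= a) by exists 0; rewrite s0.
have ub_c : forall c, s c && (c <= a) -> c <= a by move=> c /andP[].
have [c /andP[sc le_ca] max_c] := ex_maxnP ex_c ub_c.
have gap i : j - i <= a - c -> i < j -> s (j - i) = false.
  move=> le_d lt_ij; apply/negbTE/negP => sji.
  have /max_c : s (c + (j - i)) && (c + (j - i) <= a).
    rewrite sD //=; lia.
  lia.
rewrite -(big_mkord xpredT (fun i => nat_of_bool (s (j - i)))).
rewrite -(big_mkord xpredT (fun i => nat_of_bool (s (a + (j - i))))).
rewrite (@big_cat_nat _ _ _ (j - (a - c)) 0 j) ?leq_subr //=.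
rewrite [X in _ + X]big1_seq ?addn0 => [|i]; last first.
  by rewrite mem_index_iota => /andP[_ /andP[le_i lt_i]]; rewrite gap //; lia.
apply: (@leq_trans (\sum_(0 <= i < j - (a - c)) s (a + (j - (i + (a - c)))))).
  rewrite big_nat_cond [X in _ <= X]big_nat_cond.
  apply: leq_sum => i /andP[/andP[_ lt_i] _].
  have -> : a + (j - (i + (a - c))) = c + (j - i) by lia.
  by case: (boolP (s (j - i))) => // /(sD _ _ sc) ->.
rewrite -(big_addn 0 j (a - c) xpredT (fun i => nat_of_bool (s (a + (j - i))))).
rewrite (big_nat_widenl _ _ _ _ _ (leq0n (a - c))).
by rewrite [X in _ <= X](bigID (fun i => a - c <= i)) leq_addr.
Qed.

Lemma sum_ord_ltn v K : v <= K -> \sum_(l < K) (l < v) = v.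
Proof.
move=> le_vK; rewrite -(subnKC le_vK) big_split_ord /=.
rewrite [X in _ + X]big1 => [|i _]; last by rewrite ltnNge leq_addr.
rewrite (eq_bigr (fun=> 1)) => [|i _]; last by rewrite /= ltn_ord.
by rewrite sum_nat_const card_ord muln1 addn0.
Qed.

Local Open Scope ring_scope.

Lemma in_ZpP p q :
  reflect (exists2 d : nat, ~~ (p %| d)%N & q * d%:R \is a Num.int) (in_Zp p q).
Proof.
apply: (iffP idP) => [p_den | [d p'd /intrP[m def_m]]].
  exists `|denq q|%N => //.
  by rewrite pmulrn -[_%:~R]/((Posz _)%:~R) absz_denq -numqE rpred_int.
apply: contra p'd => p_den; apply: (dvdn_trans p_den).
have num_d : numq q * d = m * denq q.
  by apply: (@intr_inj rat); rewrite !rmorphM /= numqE -def_m pmulrn /=; ring.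
have : (`|denq q| %| `|numq q| * d)%N.
  by rewrite -[d]/(`|Posz d|%N) -abszM num_d abszM dvdn_mull.
by rewrite Gauss_dvdr // coprime_sym coprime_num_den.
Qed.

(* Phrased with tdvd rather than vt, which is junk at 1 - z ^+ 0 = 0. *)
Definition layer (p : nat) (z : algC) (l : nat) : pred nat :=
  fun m => `[< tdvd p z l.+1 (1 - z ^+ m) >].

Section LocalRing.

Variable p : nat.
Hypothesis p_prime : prime p.

Lemma in_Zp_int (m : int) : in_Zp p m%:~R.
Proof. by rewrite /in_Zp denq_int dvdn1 neq_ltn prime_gt1 ?orbT. Qed.

Lemma in_Zp_add a b : in_Zp p a -> in_Zp p b -> in_Zp p (a + b).
Proof.
move=> /in_ZpP[d p'd Za] /in_ZpP[e p'e Zb]; apply/in_ZpP; exists (d * e)%N.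
  by rewrite Euclid_dvdM // negb_or p'd.
have -> : (a + b) * (d * e)%N%:R = (a * d%:R) * e%:R + (b * e%:R) * d%:R.
  by rewrite natrM; ring.
by apply: rpredD; apply: rpredM => //; apply: rpred_nat.
Qed.

Lemma in_Zp_mul a b : in_Zp p a -> in_Zp p b -> in_Zp p (a * b).
Proof.
move=> /in_ZpP[d p'd Za] /in_ZpP[e p'e Zb]; apply/in_ZpP; exists (d * e)%N.
  by rewrite Euclid_dvdM // negb_or p'd.
have -> : a * b * (d * e)%N%:R = (a * d%:R) * (b * e%:R) by rewrite natrM; ring.
by rewrite rpredM.
Qed.

Lemma in_Zp_opp a : in_Zp p a -> in_Zp p (- a).
Proof. by rewrite /in_Zp denqN. Qed.

Variable z : algC.

Lemma inT_add x y : inT p z x -> inT p z y -> inT p z (x + y).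
Proof.
move=> [f Zf ->] [g Zg ->]; exists (f + g); last by rewrite rmorphD hornerD.
by move=> i; rewrite coefD in_Zp_add.
Qed.

Lemma inT_opp x : inT p z x -> inT p z (- x).
Proof.
move=> [f Zf ->]; exists (- f); last by rewrite rmorphN hornerN.
by move=> i; rewrite coefN in_Zp_opp.
Qed.

Lemma inT_sub x y : inT p z x -> inT p z y -> inT p z (x - y).
Proof. by move=> Tx Ty; apply: inT_add => //; apply: inT_opp. Qed.

Lemma inT_mul x y : inT p z x -> inT p z y -> inT p z (x * y).
Proof.
move=> [f Zf ->] [g Zg ->]; exists (f * g); last by rewrite rmorphM hornerM.
move=> i; rewrite coefM; apply: (big_ind (in_Zp p)) => [|a b|j _].
- exact: (in_Zp_int 0).
- exact: in_Zp_add.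
- exact: in_Zp_mul.
Qed.

Lemma inT_int (m : int) : inT p z m%:~R.
Proof.
exists (m%:~R)%:P; last by rewrite map_polyC hornerC /= ratr_int.
by move=> i; rewrite coefC; case: eqP => _; rewrite ?(in_Zp_int 0) ?in_Zp_int.
Qed.

Lemma inT_nat m : inT p z m%:R.
Proof. exact: (inT_int m). Qed.

Lemma inT_zeta : inT p z z.
Proof.
exists 'X; last by rewrite map_polyX hornerX.
by move=> i; rewrite coefX; case: eqP => _; rewrite ?(in_Zp_int 0) ?(in_Zp_int 1).
Qed.

Lemma inT_exp x k : inT p z x -> inT p z (x ^+ k).
Proof.
move=> Tx; elim: k => [|k IHk]; first exact: (inT_nat 1).
by rewrite exprS; apply: inT_mul.
Qed.

Lemma inT_zetaX k : inT p z (z ^+ k).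
Proof. exact/inT_exp/inT_zeta. Qed.

Lemma inT_one_sub_zetaX k : inT p z (1 - z ^+ k).
Proof. exact/inT_sub/inT_zetaX/(inT_nat 1). Qed.

Lemma inT_sum I (r : seq I) (P : pred I) (F : I -> algC) :
  (forall i, P i -> inT p z (F i)) -> inT p z (\sum_(i <- r | P i) F i).
Proof. by move=> TF; apply: big_ind => //; [apply: (inT_nat 0) | apply: inT_add]. Qed.

Lemma inT_prod I (r : seq I) (P : pred I) (F : I -> algC) :
  (forall i, P i -> inT p z (F i)) -> inT p z (\prod_(i <- r | P i) F i).
Proof. by move=> TF; apply: big_ind => //; [apply: (inT_nat 1) | apply: inT_mul]. Qed.

Lemma inT_tt : inT p z (tt z).
Proof. exact/inT_sub/inT_zeta/(inT_nat 1). Qed.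

Lemma tdvd_le k l x : (l <= k)%N -> tdvd p z k x -> tdvd p z l x.
Proof.
move=> le_lk [y Ty ->]; exists (tt z ^+ (k - l) * y); last by rewrite mulrA -exprD subnKC.
exact/inT_mul/Ty/inT_exp/inT_tt.
Qed.

Lemma tdvd_mull k u x : inT p z u -> tdvd p z k x -> tdvd p z k (u * x).
Proof. by move=> Tu [y Ty ->]; exists (u * y); [apply: inT_mul | rewrite mulrCA]. Qed.

Lemma tdvd_add k x y : tdvd p z k x -> tdvd p z k y -> tdvd p z k (x + y).
Proof. by move=> [a Ta ->] [b Tb ->]; exists (a + b); [apply: inT_add | rewrite mulrDr]. Qed.

Lemma tdvd0 k : tdvd p z k 0.
Proof. by exists 0; [apply: (inT_nat 0) | rewrite mulr0]. Qed.

Lemma inT_tdvd0 x : inT p z x -> tdvd p z 0 x.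
Proof. by exists x; rewrite ?expr0 ?mul1r. Qed.

Lemma tdvd_vt x K :
  inT p z x -> ~ tdvd p z K x -> forall k, tdvd p z k x <-> (k <= vt p z x)%N.
Proof.
move=> Tx not_tK.
have ex_v : exists k, tdvd p z k x /\ ~ tdvd p z k.+1 x.
  elim: K not_tK => [|K IHK] not_tK; first by case: not_tK; apply: inT_tdvd0.
  by have [tK | /IHK] := asboolP (tdvd p z K x); first exists K.
have [t_v not_tv1] := epsilon_spec (inhabits 0%N) _ ex_v; rewrite -/(vt p z x) in t_v not_tv1.
move=> k; split=> [t_k | le_kv]; last exact: tdvd_le t_v.
by rewrite leqNgt; apply/negP => lt_vk; apply/not_tv1/(tdvd_le lt_vk).
Qed.

Lemma vt_layers x K : inT p z x -> ~ tdvd p z K x ->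
  vt p z x = (\sum_(l < K) `[< tdvd p z l.+1 x >])%N.
Proof.
move=> Tx not_tK; have vtE := tdvd_vt Tx not_tK.
have lt_vK : (vt p z x < K)%N by rewrite ltnNge; apply/negP => /vtE.
rewrite -[LHS](sum_ord_ltn (ltnW lt_vK)).
by apply: eq_bigr => l _; congr nat_of_bool; apply/idP/asboolP => /vtE.
Qed.

Lemma layer0 l : layer p z l 0.
Proof. by apply/asboolP; rewrite expr0 subrr; apply: tdvd0. Qed.

Lemma layerD l x y : layer p z l x -> layer p z l y -> layer p z l (x + y).
Proof.
move=> /asboolP t_x /asboolP t_y; apply/asboolP.
have -> : 1 - z ^+ (x + y) = (1 - z ^+ x) + z ^+ x * (1 - z ^+ y) by rewrite exprD; ring.
exact/tdvd_add/(tdvd_mull (inT_zetaX _) t_y).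
Qed.

Hypothesis z_Aint : z \in Aint.

Lemma inT_ratr q : inT p z (ratr q) -> in_Zp p q.
Proof.
case=> f Zf def_q; pose d := (\prod_(i < size f) `|denq f`_i|)%N.
have p'd : ~~ (p %| d)%N.
  apply: (big_ind (fun m => ~~ (p %| m)%N)) => [|m k|i _]; last exact: Zf.
    by rewrite Euclid_dvd1.
  by rewrite Euclid_dvdM // negb_or => -> ->.
have Zfd (i : 'I_(size f)) : f`_i * d%:R \is a Num.int.
  rewrite /d (bigD1 i) //= natrM mulrA.
  by rewrite pmulrn -[_%:~R]/((Posz _)%:~R) absz_denq -numqE rpredM ?rpred_int ?rpred_nat.
have Aqd : ratr q * d%:R \in Aint.
  rewrite def_q horner_coef size_map_poly mulr_suml; apply: rpred_sum => i _.
  rewrite coef_map /= mulrAC -(ratr_nat algC) -rmorphM rpredM ?rpredX //.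
  by have /intrP[m ->] := Zfd i; rewrite rmorph_int Aint_int.
apply/in_ZpP; exists d => //.
by rewrite -Cint_rat rmorphM /= ratr_nat Cint_rat_Aint // rpredM ?Crat_rat ?rpred_nat.
Qed.

Lemma not_inT_invp : ~ inT p z p%:R^-1.
Proof.
rewrite -(ratr_nat algC) -fmorphV => /inT_ratr.
by rewrite /in_Zp (@denqVz p) ?dvdnn // eqz_nat -lt0n prime_gt0.
Qed.

End LocalRing.

Lemma prime_dvd_bin_pexp p n i : prime p -> (0 < i < p ^ n)%N -> (p %| 'C(p ^ n, i))%N.
Proof.
move=> p_prime /andP[i_gt0 lt_iN]; apply: contraLR lt_iN => p'C; rewrite -leqNgt.
have : (p ^ n %| i * 'C(p ^ n, i))%N by rewrite -(prednK i_gt0) -mul_bin_diag dvdn_mulr.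
by rewrite Gauss_dvdl ?coprimeXl ?prime_coprime // => /dvdn_leq; apply.
Qed.

Lemma prod_one_sub_prim_root (F : fieldType) k (eta : F) :
  k.-primitive_root eta -> \prod_(1 <= i < k) (1 - eta ^+ i) = k%:R.
Proof.
move=> prim_eta; have Xsub1_neq0 : 'X - 1 != 0 :> {poly F} by rewrite -polyC1 polyXsubC_eq0.
have := factor_Xn_sub_1 prim_eta.
rewrite big_ltn ?(prim_order_gt0 prim_eta) // expr0 subrX1 polyC1 => /(mulfI Xsub1_neq0).
move=> /(congr1 (horner^~ 1)); rewrite horner_prod horner_sum /=.
under eq_bigr do rewrite hornerXsubC.
by under [in RHS]eq_bigr do rewrite hornerXn expr1n; rewrite sumr_const card_ord.
Qed.

Section CyclotomicValuation.

Variables (p n : nat) (z : algC).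
Hypotheses (p_prime : prime p) (n_gt0 : (0 < n)%N) (prim_z : (p ^ n).-primitive_root z).
Local Notation N := (p ^ n)%N.

Lemma p_dvd_tt_expN : exists2 y, inT p z y & tt z ^+ N = p%:R * y.
Proof.
(* The extreme terms of the binomial expansion add up to 1 + (-1)^N, the other
   ones are multiples of p. *)
have [c Tc def_c] : exists2 c, inT p z c & 1 + (-1) ^+ N = p%:R * c.
  have [p2 | p_odd] := even_prime p_prime.
    exists 1; first exact: (inT_nat _ _ 1).
    by rewrite -signr_odd p2 oddX eqn0Ngt n_gt0 /= mulr1.
  exists 0; first exact: (inT_nat _ _ 0).
  by rewrite -signr_odd oddX p_odd orbT mulr0 addrN.
have zN := prim_expr_order prim_z.
have p_dvd_C := prime_dvd_bin_pexp p_prime (n := n).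
have [M def_N] : exists M, N = M.+1 by exists N.-1; rewrite prednK ?expn_gt0 ?prime_gt0.
rewrite def_N in zN p_dvd_C def_c *.
exists (c + \sum_(i < M) (- z) ^+ i.+1 *+ ('C(M.+1, i.+1) %/ p)).
  apply: (inT_add p_prime) => //; apply: (inT_sum p_prime) => i _.
  rewrite -mulr_natl; apply: (inT_mul p_prime); first exact: inT_nat.
  exact/(inT_exp p_prime)/inT_opp/inT_zeta.
rewrite /tt exprDn big_ord_recl big_ord_recr /= /bump /=.
rewrite !expr1n !mul1r expr0 bin0 binn !mulr1n exprNn zN mulr1 addrA addrAC.
rewrite mulrDr -def_c mulr_sumr; congr (_ + _); apply: eq_bigr => i _.
by rewrite expr1n mul1r add1n mulr_natl -mulrnA divnK // p_dvd_C //= ltnS ltn_ord.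
Qed.

Lemma one_sub_zetaX_dvd_p m :
  (0 < m < N)%N -> exists2 s, inT p z s & p%:R = (1 - z ^+ m) * s.
Proof.
move=> /andP[m_gt0 lt_mN]; set w := z ^+ m.
have wN : w ^+ N = 1 by rewrite exprAC (prim_expr_order prim_z) expr1n.
have [k prim_w /(dvdn_pfactor _ _ p_prime)[[|e] _ def_k]] :=
  prim_order_exists (prim_order_gt0 prim_z) wN.
  move: prim_w; rewrite def_k => /prim_expr_order; rewrite expr1 => /eqP.
  by rewrite -(prim_order_dvd prim_z) => /(dvdn_leq m_gt0); rewrite leqNgt lt_mN.
have p_dvd_k : (p %| k)%N by rewrite def_k expnS dvdn_mulr.
have := prod_one_sub_prim_root (dvdn_prim_root prim_w p_dvd_k).
rewrite def_k expnS mulKn ?prime_gt0 // big_ltn ?prime_gt1 //.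
rewrite expr1 -opprB subrX1 -mulNr opprB => <-.
exists ((\sum_(j < p ^ e) w ^+ j) * \prod_(2 <= i < p) (1 - w ^+ (p ^ e) ^+ i)); last by rewrite mulrA.
apply: (inT_mul p_prime).
  by apply: (inT_sum p_prime) => j _; rewrite -exprM; apply: inT_zetaX.
by apply: (inT_prod p_prime) => i _; rewrite -!exprM; apply: inT_one_sub_zetaX.
Qed.

Lemma not_tdvd_one_sub_zetaX m : (0 < m < N)%N -> ~ tdvd p z (N + N) (1 - z ^+ m).
Proof.
move=> m_range [y Ty def_x].
have [u Tu tN] := p_dvd_tt_expN.
have [s Ts def_p] := one_sub_zetaX_dvd_p m_range.
have p_neq0 : p%:R != 0 :> algC by rewrite pnatr_eq0 -lt0n prime_gt0.
apply: (not_inT_invp p_prime (Aint_prim_root prim_z)).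
have -> : p%:R^-1 = u ^+ 2 * y * s.
  apply: (mulfI p_neq0); rewrite mulfV //; apply: (mulfI p_neq0).
  by rewrite mulr1 {1}def_p def_x exprD tN; ring.
by apply/(inT_mul p_prime)/Ts/(inT_mul p_prime)/Ty/(inT_exp p_prime).
Qed.

Lemma tdvd_zetaXl l i x : tdvd p z l (z ^+ i * x) <-> tdvd p z l x.
Proof.
split=> [t_ix|]; last exact/(tdvd_mull p_prime)/inT_zetaX.
have -> : x = z ^+ (i * N.-1) * (z ^+ i * x).
  rewrite mulrA -exprD -mulnSr prednK ?expn_gt0 ?prime_gt0 //.
  by rewrite mulnC exprM (prim_expr_order prim_z) expr1n mul1r.
exact/(tdvd_mull p_prime)/t_ix/inT_zetaX.
Qed.

Lemma vt_sub_layers i k : (i < k < N)%N ->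
  vt p z ((1 - z ^+ k) - (1 - z ^+ i)) = (\sum_(l < N + N) layer p z l (k - i))%N.
Proof.
move=> /andP[lt_ik lt_kN].
have diff_range : (0 < k - i < N)%N by rewrite subn_gt0 lt_ik (leq_ltn_trans (leq_subr i k)).
have -> : (1 - z ^+ k) - (1 - z ^+ i) = z ^+ i * (1 - z ^+ (k - i)).
  by rewrite mulrBr mulr1 -exprD subnKC ?(ltnW lt_ik) //; ring.
rewrite (@vt_layers p p_prime z _ (N + N)).
- by apply: eq_bigr => l _; congr nat_of_bool; apply: asbool_equiv_eq; apply: tdvd_zetaXl.
- by apply: (inT_mul p_prime); [apply: inT_zetaX | apply: inT_one_sub_zetaX].
- by move/tdvd_zetaXl; apply: not_tdvd_one_sub_zetaX.
Qed.

Lemma sum_vt_sub_layers j m : (j <= m < N)%N ->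
  (\sum_(i < j) vt p z ((1 - z ^+ m) - (1 - z ^+ i))%R =
   \sum_(l < N + N) \sum_(i < j) layer p z l (m - i))%N.
Proof.
move=> /andP[le_jm lt_mN]; rewrite exchange_big; apply: eq_bigr => i _.
by apply: vt_sub_layers; rewrite lt_mN (leq_trans (ltn_ord i)).
Qed.

Lemma leq_sum_vt_sub j k : (j < k < N)%N ->
  (\sum_(i < j) vt p z ((1 - z ^+ j) - (1 - z ^+ i))%R <=
   \sum_(i < j) vt p z ((1 - z ^+ k) - (1 - z ^+ i))%R)%N.
Proof.
move=> /andP[lt_jk lt_kN].
rewrite !sum_vt_sub_layers ?leqnn ?(ltnW lt_jk) ?(ltn_trans lt_jk) //.
apply: leq_sum => l _.
have := leq_sum_shift_addn_closed (k - j) j (layer0 p_prime z l) (layerD p_prime (l := l)).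
congr (_ <= _)%N; apply: eq_bigr => i _; congr (nat_of_bool (layer p z l _)).
by have := ltn_ord i; lia.
Qed.

End CyclotomicValuation.

Theorem lemma3p14 (p n : nat) (zeta : algC) :
  prime p -> (0 < n)%N -> (p ^ n)%N.-primitive_root zeta ->
  minimally_ordered p zeta (p ^ n) (fun j : nat => 1 - zeta ^+ j).
Proof.
move=> p_prime n_gt0 prim_z.
split=> [j _ | i j lt_iN lt_jN neq_ij | j k lt_jk lt_kN].
- exact: inT_one_sub_zetaX.
- move/eqP; rewrite (inj_eq (addrI 1)) (inj_eq oppr_inj) (eq_prim_root_expr prim_z).
  by rewrite !modn_small // => /eqP.
- by apply: (leq_sum_vt_sub p_prime n_gt0 prim_z); rewrite lt_jk.
Qed.
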